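(* For a paratopological group $H$ the following are equivalent: (a) $H$ is Bohr separated; (b) $H$ is a subgroup of a totally bounded paratopological group; (c) $H$ is a $\flat$-closed subgroup of a totally bounded paratopological group.
   Context: All topological spaces are Hausdorff. A paratopological group is a group with a Hausdorff topology making multiplication continuous; a topological group additionally has continuous inversion. A paratopological group $G$ is totally bounded if for every neighborhood $U$ of the unit there is a finite $F\subset G$ with $FU=UF=G$. $H$ is Bohr separated if there is a continuous bijective homomorphism of $H$ onto a totally bounded topological group. For $(G,\tau)$, $\tau^\flat$ is the strongest group topology on $G$ weaker than $\tau$, and a set is $\flat$-closed if closed in $\tau^\flat$. ''Subgroup'' means subgroup with the induced topology. *)

From Stdlib Require Import List.

Set Implicit Arguments.

Record Grp := {
  gcar :> Type;
  gmul : gcar -> gcar -> gcar;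
  ginv : gcar -> gcar;
  gone : gcar;
  gmulA : forall x y z, gmul x (gmul y z) = gmul (gmul x y) z;
  gmul1 : forall x, gmul gone x = x;
  gmulV : forall x, gmul (ginv x) x = gone
}.
Arguments gmul {_} _ _.
Arguments ginv {_} _.
Arguments gone {_}.

Definition is_topology {T : Type} (O : (T -> Prop) -> Prop) : Prop :=
  O (fun _ => True) /\
  (forall U V, O U -> O V -> O (fun x => U x /\ V x)) /\
  (forall S : (T -> Prop) -> Prop, (forall U, S U -> O U) ->
      O (fun x => exists U, S U /\ U x)).

Definition hausdorff_top {T : Type} (O : (T -> Prop) -> Prop) : Prop :=
  forall x y : T, x <> y ->
    exists U V, O U /\ O V /\ U x /\ V y /\ (forall z, U z -> V z -> False).

Definition closed_in {T : Type} (O : (T -> Prop) -> Prop) (A : T -> Prop) :=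
  O (fun x => ~ A x).

Definition mul_continuous {G : Grp} (O : (G -> Prop) -> Prop) : Prop :=
  forall x y : G, forall W, O W -> W (gmul x y) ->
    exists U V, O U /\ O V /\ U x /\ V y /\
      (forall u v, U u -> V v -> W (gmul u v)).

Definition inv_continuous {G : Grp} (O : (G -> Prop) -> Prop) : Prop :=
  forall W, O W -> O (fun x => W (ginv x)).

(** A group topology (not required to be Hausdorff), used for tau^flat. *)
Definition group_topology {G : Grp} (O : (G -> Prop) -> Prop) : Prop :=
  is_topology O /\ mul_continuous O /\ inv_continuous O.

Definition paratopological {G : Grp} (O : (G -> Prop) -> Prop) : Prop :=
  is_topology O /\ hausdorff_top O /\ mul_continuous O.

Definition topological_group {G : Grp} (O : (G -> Prop) -> Prop) : Prop :=
  paratopological O /\ inv_continuous O.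

Definition nbhd_one {G : Grp} (O : (G -> Prop) -> Prop) (N : G -> Prop) :=
  exists U, O U /\ U (@gone G) /\ (forall x, U x -> N x).

Definition totally_bounded {G : Grp} (O : (G -> Prop) -> Prop) : Prop :=
  forall U : G -> Prop, nbhd_one O U ->
    exists F : list G,
      (forall g : G, exists f u, In f F /\ U u /\ g = gmul f u) /\
      (forall g : G, exists f u, In f F /\ U u /\ g = gmul u f).

Definition is_hom {G K : Grp} (f : G -> K) : Prop :=
  forall x y, f (gmul x y) = gmul (f x) (f y).

Definition continuous_map {S T : Type} (OS : (S -> Prop) -> Prop)
  (OT : (T -> Prop) -> Prop) (f : S -> T) : Prop :=
  forall V, OT V -> OS (fun x => V (f x)).

Definition bohr_separated {H : Grp} (OH : (H -> Prop) -> Prop) : Prop :=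
  exists (K : Grp) (OK : (K -> Prop) -> Prop) (f : H -> K),
    topological_group OK /\ totally_bounded OK /\
    is_hom f /\ continuous_map OH OK f /\
    (forall x y, f x = f y -> x = y) /\ (forall k, exists x, f x = k).

Definition is_flat {G : Grp} (tau sigma : (G -> Prop) -> Prop) : Prop :=
  group_topology sigma /\ (forall U, sigma U -> tau U) /\
  (forall rho, group_topology rho -> (forall U, rho U -> tau U) ->
     forall U, rho U -> sigma U).

Definition flat_closed {G : Grp} (tau : (G -> Prop) -> Prop) (A : G -> Prop) :=
  exists sigma, is_flat tau sigma /\ closed_in sigma A.

(** f : H -> G realizes H as a subgroup of G with the induced topology:
    an injective homomorphism such that the opens of H are exactly the
    preimages of opens of G. *)
Definition subgroup_embedding {H G : Grp} (OH : (H -> Prop) -> Prop)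
  (OG : (G -> Prop) -> Prop) (f : H -> G) : Prop :=
  is_hom f /\ (forall x y, f x = f y -> x = y) /\
  (forall U, OH U <-> exists V, OG V /\ (forall x, U x <-> V (f x))).

(* (c) => (b) is trivial.
   (b) => (a): in a totally bounded paratopological group every unit neighbourhood [U]
   contains [W^-1 z] for some unit neighbourhood [W] and some [z], hence the sets [U U^-1]
   form the unit base of a Hausdorff totally bounded group topology.  Its trace on [H] is
   coarser than the topology of [H], so the identity of [H] witnesses Bohr separation.
   (a) => (c): given a continuous bijective homomorphism [phi] of [H] onto a totally bounded
   topological group [K], topologize [H x R/Z] so that [H x {0}] carries the topology of [H]
   while the group reflection is the product topology of [K x R/Z], in which [H x {0}] is
   closed. *)

From Stdlib Require Import Reals Lra Lia List Classical ClassicalEpsilon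
  FunctionalExtensionality PropExtensionality ProofIrrelevance.

Arguments gmulA {_} _ _ _.
Arguments gmul1 {_} _.
Arguments gmulV {_} _.

Section GroupAlgebra.
Context {G : Grp}.
Implicit Types x y z : G.

Lemma gmulAr x y z : gmul (gmul x y) z = gmul x (gmul y z).
Proof. now rewrite gmulA. Qed.

Lemma gmulKg x y : gmul (ginv x) (gmul x y) = y.
Proof. now rewrite gmulA, gmulV, gmul1. Qed.

Lemma gmulgV x : gmul x (ginv x) = gone.
Proof.
  rewrite <- (gmul1 (gmul x (ginv x))), <- (gmulV (ginv x)), gmulAr.
  now rewrite (gmulA (ginv x) x), gmulV, gmul1.
Qed.

Lemma gmulg1 x : gmul x gone = x.
Proof. now rewrite <- (gmulV x), gmulA, gmulgV, gmul1. Qed.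

Lemma gmulKVg x y : gmul x (gmul (ginv x) y) = y.
Proof. now rewrite gmulA, gmulgV, gmul1. Qed.

Lemma ginv_unique x y : gmul x y = gone -> ginv x = y.
Proof. intro E. now rewrite <- (gmulg1 (ginv x)), <- E, gmulKg. Qed.

Lemma ginvK x : ginv (ginv x) = x.
Proof. apply ginv_unique, gmulV. Qed.

Lemma ginvM x y : ginv (gmul x y) = gmul (ginv y) (ginv x).
Proof. apply ginv_unique. now rewrite gmulAr, gmulKVg, gmulgV. Qed.

Lemma ginv1 : ginv (@gone G) = gone.
Proof. apply ginv_unique, gmul1. Qed.

End GroupAlgebra.

Ltac gsimpl := repeat rewrite ?ginvM, ?ginvK, ?ginv1, ?gmulAr, ?gmulV, ?gmulgV,
   ?gmul1, ?gmulg1, ?gmulKg, ?gmulKVg.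

Section Homomorphisms.
Context {G K : Grp} (f : G -> K).
Hypothesis Hf : is_hom f.

Lemma hom_one : f gone = gone.
Proof.
  assert (E : f gone = gmul (f gone) (f gone)) by now rewrite <- Hf, gmul1.
  now rewrite <- (gmulKg (f gone) (f gone)), <- E, gmulV.
Qed.

Lemma hom_inv x : f (ginv x) = ginv (f x).
Proof. symmetry. apply ginv_unique. now rewrite <- Hf, gmulgV, hom_one. Qed.

End Homomorphisms.

Section Topology.
Context {T : Type} (O : (T -> Prop) -> Prop).
Hypothesis HT : is_topology O.

Lemma open_of_nbhds (S : T -> Prop) :
  (forall p, S p -> exists U, O U /\ U p /\ forall x, U x -> S x) -> O S.
Proof.
  intro H. destruct HT as [_ [_ HU]].
  replace S with (fun x => exists U, (O U /\ forall y, U y -> S y) /\ U x).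
  - apply HU. now intros U [OU _].
  - apply functional_extensionality; intro x; apply propositional_extensionality; split.
    + intros [U [[_ US] Ux]]. auto.
    + intro Sx. destruct (H x Sx) as [U [OU [Ux US]]]. eauto.
Qed.

Lemma open_inter U V : O U -> O V -> O (fun x => U x /\ V x).
Proof. apply HT. Qed.

Lemma open_full : O (fun _ => True).
Proof. apply HT. Qed.

End Topology.

Section Paratopological.
Context {G : Grp} (O : (G -> Prop) -> Prop).
Hypotheses (HT : is_topology O) (HM : mul_continuous O).

Lemma open_mul_l W c : O W -> O (fun z => W (gmul c z)).
Proof.
  intro OW. apply open_of_nbhds; auto. intros z Wz.
  destruct (HM c z W OW Wz) as [U [V [_ [OV [Uc [Vz HUV]]]]]]. eauto.
Qed.

Lemma open_mul_r W c : O W -> O (fun z => W (gmul z c)).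
Proof.
  intro OW. apply open_of_nbhds; auto. intros z Wz.
  destruct (HM z c W OW Wz) as [U [V [OU [_ [Uz [Vc HUV]]]]]]. eauto.
Qed.

Lemma unit_nbhd_mul W : O W -> W gone ->
  exists U, O U /\ U gone /\ forall x y, U x -> U y -> W (gmul x y).
Proof.
  intros OW W1. rewrite <- (gmul1 gone) in W1.
  destruct (HM _ _ W OW W1) as [A [B [OA [OB [A1 [B1 HAB]]]]]].
  exists (fun x => A x /\ B x). split; [now apply open_inter|].
  split; [auto|]. intros x y [Ax _] [_ By]. auto.
Qed.

Lemma unit_nbhd_conj W (c : G) : O W -> W gone ->
  exists U, O U /\ U gone /\ forall x, U x -> W (gmul (ginv c) (gmul x c)).
Proof.
  intros OW W1. exists (fun x => W (gmul (ginv c) (gmul x c))). split.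
  - apply (open_mul_r (fun z => W (gmul (ginv c) z))). now apply open_mul_l.
  - split; [now rewrite gmul1, gmulV|auto].
Qed.

End Paratopological.

Definition finitely_covered {G : Grp} (N : G -> Prop) : Prop :=
  exists F : list G,
    (forall g : G, exists f u, In f F /\ N u /\ g = gmul f u) /\
    (forall g : G, exists f u, In f F /\ N u /\ g = gmul u f).

Section NbhdTopology.
Context {G : Grp} (B : (G -> Prop) -> Prop).

Definition nbhd_topology (S : G -> Prop) : Prop :=
  forall p, S p -> exists N, B N /\ forall x, N x -> S (gmul p x).

Definition nbhd_interior (S : G -> Prop) (p : G) : Prop :=
  exists N, B N /\ forall x, N x -> S (gmul p x).

Record nbhd_system : Prop := {
  ns_nonempty : exists N, B N;
  ns_one : forall N, B N -> N gone;
  ns_meet : forall N1 N2, B N1 -> B N2 ->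
    exists N, B N /\ forall x, N x -> N1 x /\ N2 x;
  ns_mul : forall N, B N ->
    exists N', B N' /\ forall x y, N' x -> N' y -> N (gmul x y);
  ns_conj : forall N c, B N ->
    exists N', B N' /\ forall x, N' x -> N (gmul (ginv c) (gmul x c))
}.

Hypothesis HB : nbhd_system.

Lemma nbhd_topology_is_topology : is_topology nbhd_topology.
Proof.
  split; [|split].
  - destruct (ns_nonempty HB) as [N BN]. intros p _. eauto.
  - intros U V HU HV p [Up Vp].
    destruct (HU p Up) as [N1 [BN1 H1]], (HV p Vp) as [N2 [BN2 H2]].
    destruct (ns_meet HB _ _ BN1 BN2) as [N [BN HN]].
    exists N. split; [auto|]. intros x Nx. destruct (HN x Nx). auto.
  - intros S HS p [U [SU Up]]. destruct (HS U SU p Up) as [N [BN HN]].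
    exists N. split; [auto|]. intros x Nx. eauto.
Qed.

Lemma nbhd_interior_sub S p : nbhd_interior S p -> S p.
Proof. intros [N [BN HN]]. rewrite <- (gmulg1 p). apply HN, (ns_one HB _), BN. Qed.

Lemma nbhd_interior_open S : nbhd_topology (nbhd_interior S).
Proof.
  intros p [N [BN HN]]. destruct (ns_mul HB _ BN) as [N' [BN' HN']].
  exists N'. split; [auto|]. intros x Nx. exists N'. split; [auto|].
  intros y Ny. rewrite gmulAr. auto.
Qed.

Lemma nbhd_translate_open N p : B N ->
  exists U, nbhd_topology U /\ U p /\ forall z, U z -> N (gmul (ginv p) z).
Proof.
  intro BN. exists (nbhd_interior (fun z => N (gmul (ginv p) z))).
  split; [apply nbhd_interior_open|]. split.
  - exists N. split; [auto|]. intros x Nx. now rewrite gmulKg.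
  - intros z Hz. now apply nbhd_interior_sub in Hz.
Qed.

Lemma nbhd_one_nbhd_topology N : B N -> nbhd_one nbhd_topology N.
Proof.
  intro BN. destruct (nbhd_translate_open _ gone BN) as [U [OU [U1 HU]]].
  exists U. repeat split; auto. intros x Ux. rewrite <- (gmul1 x), <- ginv1. auto.
Qed.

Lemma nbhd_topology_mul_continuous : mul_continuous nbhd_topology.
Proof.
  intros x y W HW Wxy. destruct (HW _ Wxy) as [N [BN HN]].
  destruct (ns_mul HB _ BN) as [N' [BN' HN']].
  destruct (ns_conj HB _ y BN') as [N1 [BN1 H1]].
  destruct (nbhd_translate_open _ x BN1) as [U [OU [Ux HU]]].
  destruct (nbhd_translate_open _ y BN') as [V [OV [Vy HV]]].
  exists U, V. repeat split; auto. intros u v Uu Vv.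
  specialize (HN _ (HN' _ _ (H1 _ (HU u Uu)) (HV v Vv))). revert HN. now gsimpl.
Qed.

Lemma nbhd_topology_inv_continuous :
  (forall N, B N -> exists N', B N' /\ forall x, N' x -> N (ginv x)) ->
  inv_continuous nbhd_topology.
Proof.
  intros Hsym W HW p Wp. destruct (HW _ Wp) as [N [BN HN]].
  destruct (ns_conj HB _ (ginv p) BN) as [N1 [BN1 H1]].
  destruct (Hsym N1 BN1) as [N2 [BN2 H2]].
  exists N2. split; [auto|]. intros x Nx. specialize (HN _ (H1 _ (H2 _ Nx))).
  revert HN. now gsimpl.
Qed.

Lemma nbhd_topology_hausdorff :
  (forall g, g <> gone -> exists N, B N /\ forall x y, N x -> N y -> gmul g x <> y) ->
  hausdorff_top nbhd_topology.
Proof.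
  intros Hsep p q Hpq.
  assert (Hg : gmul (ginv q) p <> gone).
  { intro E. apply Hpq. now rewrite <- (gmulKVg q p), E, gmulg1. }
  destruct (Hsep _ Hg) as [N [BN HN]].
  destruct (nbhd_translate_open _ p BN) as [U [OU [Up HU]]].
  destruct (nbhd_translate_open _ q BN) as [V [OV [Vq HV]]].
  exists U, V. repeat split; auto. intros z Uz Vz.
  apply (HN _ _ (HU z Uz) (HV z Vz)). now gsimpl.
Qed.

Lemma nbhd_topology_totally_bounded :
  (forall N, B N -> finitely_covered N) -> totally_bounded nbhd_topology.
Proof.
  intros Hcov U [W [OW [W1 HWU]]]. destruct (OW _ W1) as [N [BN HN]].
  destruct (Hcov N BN) as [F [F1 F2]]. exists F. split; intro g.
  - destruct (F1 g) as [f [u [Hf [Nu E]]]]. exists f, u. repeat split; auto.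
    apply HWU. rewrite <- (gmul1 u). auto.
  - destruct (F2 g) as [f [u [Hf [Nu E]]]]. exists f, u. repeat split; auto.
    apply HWU. rewrite <- (gmul1 u). auto.
Qed.

Lemma nbhd_topology_coarser (O : (G -> Prop) -> Prop) :
  is_topology O -> mul_continuous O -> (forall N, B N -> nbhd_one O N) ->
  forall S, nbhd_topology S -> O S.
Proof.
  intros HT HM HBO S HS. apply open_of_nbhds; auto. intros p Sp.
  destruct (HS p Sp) as [N [BN HN]]. destruct (HBO N BN) as [U [OU [U1 HU]]].
  exists (fun z => U (gmul (ginv p) z)). split; [now apply open_mul_l|].
  split; [now rewrite gmulV|]. intros z Uz.
  rewrite <- (gmulKVg p z). auto.
Qed.

End NbhdTopology.

Definition mul_inv_set {G : Grp} (U : G -> Prop) (x : G) : Prop :=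
  exists a b, U a /\ U b /\ x = gmul a (ginv b).

Lemma unit_nbhd_avoid {G : Grp} (O : (G -> Prop) -> Prop) (g : G) :
  paratopological O -> g <> gone ->
  exists U, O U /\ U gone /\ ~ mul_inv_set U g.
Proof.
  intros [HT [HH HM]] Hg.
  destruct (HH gone g (fun E => Hg (eq_sym E))) as [P [Q [OP [OQ [P1 [Qg HPQ]]]]]].
  exists (fun z => P z /\ Q (gmul g z)). split.
  { apply open_inter; auto. now apply open_mul_l. }
  split; [now rewrite gmulg1|].
  intros [a [b [[Pa _] [[_ Qb] E]]]]. apply (HPQ a Pa). subst g. revert Qb. now gsimpl.
Qed.

Section TotallyBounded.
Context {G : Grp} (O : (G -> Prop) -> Prop).
Hypotheses (HP : paratopological O) (TB : totally_bounded O).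

(* Induction on [b0 :: Bs]: if no nonempty open subset of [W] is covered by the
   translates [b V^-1] with [b] in [Bs], every [x] in [W] has a point of [W /\ x V]
   in [b0 V^-1], whence [x] lies in [b0 V^-1 V^-1 = b0 (V V)^-1]. *)
Lemma nonempty_open_in_translate (U V : G -> Prop) :
  O V -> V gone -> (forall x y, V x -> V y -> U (gmul x y)) ->
  forall (Bs : list G) (W : G -> Prop), O W -> (exists w, W w) ->
  (forall x, W x -> exists b v, In b Bs /\ V v /\ x = gmul b (ginv v)) ->
  exists b W', O W' /\ (exists w, W' w) /\
    forall x, W' x -> exists u, U u /\ x = gmul b (ginv u).
Proof.
  destruct HP as [HT [_ HM]]. intros OV V1 HVU Bs.
  induction Bs as [|b0 Bs IH]; intros W OW [w Ww] HW.
  { destruct (HW w Ww) as [b [v [[] _]]]. }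
  destruct (classic (exists W', O W' /\ (exists w, W' w) /\
      forall x, W' x -> exists b v, In b Bs /\ V v /\ x = gmul b (ginv v)))
    as [[W' [OW' [ne HW']]]|Hn].
  { exact (IH W' OW' ne HW'). }
  exists b0, W. split; [auto|]. split; [eauto|]. intros x Wx.
  assert (Hz : exists z, (W z /\ V (gmul (ginv x) z)) /\
               ~ exists b v, In b Bs /\ V v /\ z = gmul b (ginv v)).
  { apply NNPP. intro Hc. apply Hn.
    exists (fun z => W z /\ V (gmul (ginv x) z)). split.
    - apply open_inter; auto. now apply open_mul_l.
    - split; [exists x; now rewrite gmulV|].
      intros z Hz. apply NNPP. intro Hz'. apply Hc. eauto. }
  destruct Hz as [z [[Wz Vz] Hnz]].
  destruct (HW z Wz) as [b [v [[<-|Hb] [Vv Ez]]]]; [|exfalso; apply Hnz; eauto].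
  exists (gmul (gmul (ginv x) z) v). split; [auto|].
  subst z. now gsimpl.
Qed.

Lemma inv_unit_nbhd_interior (U : G -> Prop) : O U -> U gone ->
  exists W z, O W /\ W gone /\ forall w, W w -> U (gmul (ginv w) z).
Proof.
  intros OU U1. destruct HP as [HT [_ HM]].
  destruct (unit_nbhd_mul O HT HM U OU U1) as [V [OV [V1 HV]]].
  destruct (TB V) as [F [_ F2]]. { exists V. auto. }
  destruct (nonempty_open_in_translate U V OV V1 HV (map ginv F) (fun _ => True))
    as [b [W [OW [[o Wo] HW]]]].
  { now apply open_full. }
  { now exists gone. }
  { intros x _. destruct (F2 (ginv x)) as [f [u [Hf [Vu E]]]].
    exists (ginv f), u. split; [now apply in_map|]. split; [auto|].
    rewrite <- (ginvK x), E. now gsimpl. }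
  exists (fun w => W (gmul o w)), (gmul (ginv o) b).
  split; [now apply open_mul_l|]. split; [now rewrite gmulg1|].
  intros w Ww. destruct (HW _ Ww) as [u [Uu E]].
  replace (gmul (ginv w) (gmul (ginv o) b)) with (gmul (ginv (gmul o w)) b)
    by now gsimpl.
  rewrite E. now gsimpl.
Qed.

Lemma unit_nbhd_inv_mul (U : G -> Prop) : O U -> U gone ->
  exists W, O W /\ W gone /\
    forall x y, W x -> W y -> mul_inv_set U (gmul (ginv x) y).
Proof.
  intros OU U1. destruct (inv_unit_nbhd_interior U OU U1) as [W [z [OW [W1 HW]]]].
  exists W. repeat split; auto. intros x y Wx Wy.
  exists (gmul (ginv x) z), (gmul (ginv y) z). repeat split; auto. now gsimpl.
Qed.

Lemma unit_nbhd_mul_inv_mul (U : G -> Prop) : O U -> U gone ->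
  exists V, O V /\ V gone /\
    forall x y, mul_inv_set V x -> mul_inv_set V y -> mul_inv_set U (gmul x y).
Proof.
  intros OU U1. destruct HP as [HT [_ HM]].
  destruct (unit_nbhd_mul O HT HM U OU U1) as [U' [OU' [U'1 HU']]].
  destruct (unit_nbhd_inv_mul U' OU' U'1) as [W [OW [W1 HW]]].
  exists (fun x => W x /\ U' x). split; [now apply open_inter|]. split; [auto|].
  intros x y [a [b [[Wa Ua] [[Wb Ub] ->]]]] [c [d [[Wc Uc] [[Wd Ud] ->]]]].
  destruct (HW b c Wb Wc) as [p [q [Up [Uq E]]]].
  exists (gmul a p), (gmul d q). split; [auto|]. split; [auto|].
  replace (gmul (gmul a (ginv b)) (gmul c (ginv d)))
    with (gmul a (gmul (gmul (ginv b) c) (ginv d))) by now gsimpl.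
  rewrite E. now gsimpl.
Qed.

End TotallyBounded.

Section SubgroupOfTotallyBounded.
Context {H G : Grp} (OG : (G -> Prop) -> Prop) (f : H -> G).
Hypotheses (HP : paratopological OG) (TB : totally_bounded OG) (Hf : is_hom f).

(* Trace on [H] of the group topology of [G] with unit base [U U^-1]. *)
Definition mul_inv_nbhd (N : H -> Prop) : Prop :=
  exists U, OG U /\ U gone /\ forall x, mul_inv_set U (f x) -> N x.

Lemma mul_inv_nbhd_of U : OG U -> U gone -> mul_inv_nbhd (fun x => mul_inv_set U (f x)).
Proof. intros OU U1. now exists U. Qed.

Lemma mul_inv_nbhd_system : nbhd_system mul_inv_nbhd.
Proof.
  destruct HP as [HT [_ HM]]. split.
  - exists (fun _ => True), (fun _ => True). repeat split; auto. now apply open_full.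
  - intros N [U [OU [U1 HN]]]. apply HN. exists gone, gone.
    rewrite (hom_one f Hf). now gsimpl.
  - intros N1 N2 [U1 [OU1 [U11 H1]]] [U2 [OU2 [U21 H2]]].
    exists (fun x => mul_inv_set (fun a => U1 a /\ U2 a) (f x)). split.
    + apply mul_inv_nbhd_of; [now apply open_inter|now split].
    + intros x [a [b [[? ?] [[? ?] E]]]]. split; [apply H1|apply H2]; exists a, b; auto.
  - intros N [U [OU [U1 HN]]].
    destruct (unit_nbhd_mul_inv_mul OG HP TB U OU U1) as [V [OV [V1 HV]]].
    exists (fun x => mul_inv_set V (f x)). split; [now apply mul_inv_nbhd_of|].
    intros x y Hx Hy. apply HN. rewrite Hf. auto.
  - intros N c [U [OU [U1 HN]]].
    destruct (unit_nbhd_conj OG HT HM U (f c) OU U1) as [U' [OU' [U'1 HU']]].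
    exists (fun x => mul_inv_set U' (f x)). split; [now apply mul_inv_nbhd_of|].
    intros x [a [b [Ua [Ub E]]]]. apply HN.
    exists (gmul (ginv (f c)) (gmul a (f c))), (gmul (ginv (f c)) (gmul b (f c))).
    split; [auto|]. split; [auto|].
    rewrite !Hf, (hom_inv f Hf), E. now gsimpl.
Qed.

Lemma mul_inv_nbhd_inv N : mul_inv_nbhd N ->
  exists N', mul_inv_nbhd N' /\ forall x, N' x -> N (ginv x).
Proof.
  intros [U [OU [U1 HN]]]. exists (fun x => mul_inv_set U (f x)).
  split; [now apply mul_inv_nbhd_of|]. intros x [a [b [Ua [Ub E]]]]. apply HN.
  exists b, a. repeat split; auto. rewrite (hom_inv f Hf), E. now gsimpl.
Qed.

Lemma mul_inv_nbhd_separating : (forall x y, f x = f y -> x = y) ->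
  forall g, g <> gone -> exists N, mul_inv_nbhd N /\ forall x y, N x -> N y -> gmul g x <> y.
Proof.
  intros Hi g Hg.
  assert (Hfg : f g <> gone) by (intro E; apply Hg, Hi; now rewrite (hom_one f Hf)).
  destruct (unit_nbhd_avoid OG (f g) HP Hfg) as [U1 [OU1 [U11 HU1]]].
  destruct (unit_nbhd_mul_inv_mul OG HP TB U1 OU1 U11) as [U [OU [U1' HU]]].
  exists (fun x => mul_inv_set U (f x)). split; [now apply mul_inv_nbhd_of|].
  intros x y Hx [c [d [Uc [Ud Ey]]]] <-. apply HU1.
  replace (f g) with (gmul (f (gmul g x)) (ginv (f x))) by (rewrite Hf; now gsimpl).
  apply HU; [now exists c, d|].
  destruct Hx as [a [b [Ua [Ub ->]]]]. exists b, a. repeat split; auto. now gsimpl.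
Qed.

Lemma mul_inv_nbhd_finitely_covered N : mul_inv_nbhd N -> finitely_covered N.
Proof.
  intros [U [OU [U1 HN]]].
  destruct (unit_nbhd_inv_mul OG HP TB U OU U1) as [W [OW [W1 HW]]].
  destruct (TB W) as [F1 [C1 _]]. { now exists W. }
  destruct (TB U) as [F2 [_ C2]]. { now exists U. }
  set (pick1 := fun c : G =>
    epsilon (inhabits (@gone H)) (fun h => exists w, W w /\ f h = gmul c w)).
  set (pick2 := fun c : G =>
    epsilon (inhabits (@gone H)) (fun h => exists u, U u /\ f h = gmul u c)).
  exists (map pick1 F1 ++ map pick2 F2). split; intro g.
  - destruct (C1 (f g)) as [c [w0 [Hin [Ww0 E]]]].
    assert (Hc : exists w, W w /\ f (pick1 c) = gmul c w)
      by (apply (epsilon_spec (inhabits gone)); eauto).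
    destruct Hc as [w1 [Ww1 E1]].
    exists (pick1 c), (gmul (ginv (pick1 c)) g).
    split; [apply in_or_app; left; now apply in_map|].
    split; [|now gsimpl]. apply HN.
    rewrite Hf, (hom_inv f Hf), E1, E.
    replace (gmul (ginv (gmul c w1)) (gmul c w0)) with (gmul (ginv w1) w0) by now gsimpl.
    now apply HW.
  - destruct (C2 (f g)) as [c [u0 [Hin [Uu0 E]]]].
    assert (Hc : exists u, U u /\ f (pick2 c) = gmul u c)
      by (apply (epsilon_spec (inhabits gone)); eauto).
    destruct Hc as [u1 [Uu1 E1]].
    exists (pick2 c), (gmul g (ginv (pick2 c))).
    split; [apply in_or_app; right; now apply in_map|].
    split; [|now gsimpl]. apply HN.
    exists u0, u1. repeat split; auto. rewrite Hf, (hom_inv f Hf), E1, E. now gsimpl.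
Qed.

End SubgroupOfTotallyBounded.

Lemma bohr_separated_of_subgroup {H G : Grp} (OH : (H -> Prop) -> Prop)
    (OG : (G -> Prop) -> Prop) (f : H -> G) :
  paratopological OH -> paratopological OG -> totally_bounded OG ->
  subgroup_embedding OH OG f -> bohr_separated OH.
Proof.
  intros [HT [_ HM]] HP TB [Hf [Hi HE]].
  pose proof (mul_inv_nbhd_system OG f HP TB Hf) as Hsys.
  exists H, (nbhd_topology (mul_inv_nbhd OG f)), (fun x => x).
  split; [|split; [|split; [|split; [|split]]]].
  - split; [split; [|split]|].
    + now apply nbhd_topology_is_topology.
    + apply nbhd_topology_hausdorff; auto. now apply mul_inv_nbhd_separating.
    + now apply nbhd_topology_mul_continuous.
    + apply nbhd_topology_inv_continuous; auto. now apply mul_inv_nbhd_inv.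
  - apply nbhd_topology_totally_bounded. now apply mul_inv_nbhd_finitely_covered.
  - now intros x y.
  - intros V HV. apply (nbhd_topology_coarser (mul_inv_nbhd OG f) OH HT HM); auto.
    intros N [U [OU [U1 HN]]].
    exists (fun x => U (f x)). split; [apply HE; now exists U|].
    split; [now rewrite (hom_one f Hf)|].
    intros x Ux. apply HN. exists (f x), gone. repeat split; auto. now gsimpl.
  - auto.
  - intro k. now exists k.
Qed.

Definition grp_prod (G1 G2 : Grp) : Grp.
Proof.
  refine {| gcar := (gcar G1 * gcar G2)%type;
            gmul := fun p q => (gmul (fst p) (fst q), gmul (snd p) (snd q));
            ginv := fun p => (ginv (fst p), ginv (snd p));
            gone := (gone, gone) |}.
  - intros x y z. simpl. now rewrite !gmulA.
  - intros [x t]. simpl. now rewrite !gmul1.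
  - intros [x t]. simpl. now rewrite !gmulV.
Defined.

Open Scope R_scope.

(* The circle group R/Z, represented on [0, 1). *)
Definition circle_car : Type := {x : R | 0 <= x < 1}.

Definition cval (x : circle_car) : R := proj1_sig x.

Lemma cval_range (x : circle_car) : 0 <= cval x < 1.
Proof. exact (proj2_sig x). Qed.

Lemma cval_inj (x y : circle_car) : cval x = cval y -> x = y.
Proof.
  destruct x as [a pa], y as [b pb]; unfold cval; simpl. intros ->.
  f_equal. apply proof_irrelevance.
Qed.

Lemma zero_in_unit_interval : 0 <= 0 < 1.
Proof. lra. Qed.

(* Junk value [0] outside [0, 1). *)
Definition circle_of (r : R) : circle_car :=
  match Rle_dec 0 r, Rlt_dec r 1 with
  | left h1, left h2 => exist _ r (conj h1 h2)
  | _, _ => exist _ 0 zero_in_unit_interval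
  end.

Lemma cval_circle_of r : 0 <= r < 1 -> cval (circle_of r) = r.
Proof.
  intros [h1 h2]. unfold circle_of.
  destruct (Rle_dec 0 r); [|lra]. now destruct (Rlt_dec r 1); [|lra].
Qed.

Definition cadd (x y : circle_car) : circle_car :=
  circle_of (if Rlt_dec (cval x + cval y) 1 then cval x + cval y else cval x + cval y - 1).

Definition czero : circle_car := circle_of 0.

Definition cinv (x : circle_car) : circle_car :=
  circle_of (if Req_EM_T (cval x) 0 then 0 else 1 - cval x).

Lemma cval_czero : cval czero = 0.
Proof. apply cval_circle_of. lra. Qed.

Lemma cadd_cases x y :
  (cval x + cval y < 1 /\ cval (cadd x y) = cval x + cval y) \/
  (1 <= cval x + cval y /\ cval (cadd x y) = cval x + cval y - 1).
Proof.
  pose proof (cval_range x). pose proof (cval_range y). unfold cadd.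
  destruct (Rlt_dec (cval x + cval y) 1).
  - left. split; [auto|]. apply cval_circle_of. lra.
  - right. split; [lra|]. apply cval_circle_of. lra.
Qed.

Lemma cinv_cases x :
  (cval x = 0 /\ cval (cinv x) = 0) \/ (0 < cval x /\ cval (cinv x) = 1 - cval x).
Proof.
  pose proof (cval_range x). unfold cinv. destruct (Req_EM_T (cval x) 0).
  - left. split; [auto|]. apply cval_circle_of. lra.
  - right. split; [lra|]. apply cval_circle_of. lra.
Qed.

Lemma caddA x y z : cadd x (cadd y z) = cadd (cadd x y) z.
Proof.
  apply cval_inj. pose proof (cval_range x). pose proof (cval_range y).
  pose proof (cval_range z).
  destruct (cadd_cases y z) as [[a1 a2]|[a1 a2]];
  destruct (cadd_cases x (cadd y z)) as [[b1 b2]|[b1 b2]];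
  destruct (cadd_cases x y) as [[c1 c2]|[c1 c2]];
  destruct (cadd_cases (cadd x y) z) as [[d1 d2]|[d1 d2]]; lra.
Qed.

Lemma cadd0 x : cadd czero x = x.
Proof.
  apply cval_inj. pose proof (cval_range x). pose proof cval_czero.
  destruct (cadd_cases czero x) as [[a1 a2]|[a1 a2]]; lra.
Qed.

Lemma caddV x : cadd (cinv x) x = czero.
Proof.
  apply cval_inj. pose proof (cval_range x). pose proof cval_czero.
  destruct (cinv_cases x) as [[a1 a2]|[a1 a2]];
  destruct (cadd_cases (cinv x) x) as [[b1 b2]|[b1 b2]]; lra.
Qed.

Lemma caddC x y : cadd x y = cadd y x.
Proof.
  apply cval_inj.
  destruct (cadd_cases x y) as [[b1 b2]|[b1 b2]];
  destruct (cadd_cases y x) as [[c1 c2]|[c1 c2]]; lra.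
Qed.

Definition circle : Grp := @Build_Grp circle_car cadd cinv czero caddA cadd0 caddV.


Lemma cadd_conj a t : cadd (cinv a) (cadd t a) = t.
Proof. now rewrite (caddC t a), caddA, caddV, cadd0. Qed.

Lemma grid_step (d : R) (m : nat) (s : R) : 0 < d -> 0 < s <= INR m * d ->
  exists k, (k < m)%nat /\ INR k * d < s <= INR (S k) * d.
Proof.
  intro hd. revert s. induction m as [|m IH]; intros s [h1 h2].
  - simpl in h2. lra.
  - destruct (Rle_dec s (INR m * d)) as [h|h].
    + destruct (IH s) as [k [hk hs]]; [lra|]. exists k. split; [lia|auto].
    + exists m. split; [lia|]. split; lra.
Qed.

Lemma circle_finitely_covered (eps : R) : 0 < eps -> exists F : list circle,
  forall s : circle, exists r t, In r F /\ 0 < cval t < eps /\ s = cadd r t.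
Proof.
  intros he. destruct (archimed_cor1 (Rmin eps (1/2))) as [n [hn hn0]].
  { apply Rmin_glb_lt; lra. }
  pose proof (Rmin_l eps (1/2)). pose proof (Rmin_r eps (1/2)).
  assert (hN : 0 < INR n) by (apply lt_0_INR; lia).
  set (d := / INR n).
  assert (hnd : INR n * d = 1) by (unfold d; field; lra).
  assert (hde : 0 < d < eps /\ d < 1/2).
  { unfold d. split; [split; [now apply Rinv_0_lt_compat|]|]; lra. }
  exists (map (fun k => circle_of (INR k * d)) (seq 0 n)). intro s.
  pose proof (cval_range s).
  destruct (Req_dec (cval s) 0) as [h0|h0].
  - destruct n as [|m]; [lia|]. rewrite S_INR in hnd.
    assert (hm : 0 <= INR m) by apply pos_INR.
    exists (circle_of (INR m * d)), (circle_of d). split.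
    { apply (in_map (fun k => circle_of (INR k * d))), in_seq. lia. }
    rewrite cval_circle_of by lra. split; [lra|].
    apply cval_inj. destruct (cadd_cases (circle_of (INR m * d)) (circle_of d))
      as [[a1 a2]|[a1 a2]]; rewrite ?cval_circle_of in a1, a2 by nra; lra.
  - destruct (grid_step d n (cval s)) as [k [hk [hs1 hs2]]]; [lra|lra|].
    rewrite S_INR in hs2. assert (hk0 : 0 <= INR k) by apply pos_INR.
    exists (circle_of (INR k * d)), (circle_of (cval s - INR k * d)). split.
    { apply (in_map (fun k => circle_of (INR k * d))), in_seq. lia. }
    rewrite cval_circle_of by lra. split; [lra|].
    apply cval_inj.
    destruct (cadd_cases (circle_of (INR k * d)) (circle_of (cval s - INR k * d)))
      as [[a1 a2]|[a1 a2]]; rewrite ?cval_circle_of in a1, a2 by nra; lra.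
Qed.

Lemma circle_near_zero_diff (e : R) (r : circle) : 0 < e <= 1/2 ->
  cval r < e \/ 1 - e < cval r ->
  exists s t : circle, 0 < cval s < e /\ 0 < cval t < e /\ r = cadd s (cinv t).
Proof.
  intros he hr. pose proof (cval_range r).
  assert (Hdiff : forall a b, 0 < a < e -> 0 < b < e -> cval r = a - b \/ cval r = a - b + 1 ->
            exists s t : circle, 0 < cval s < e /\ 0 < cval t < e /\ r = cadd s (cinv t)).
  { intros a b ha hb hab. exists (circle_of a), (circle_of b).
    rewrite !cval_circle_of by lra. split; [lra|]. split; [lra|]. apply cval_inj.
    destruct (cinv_cases (circle_of b)) as [[d1 d2]|[d1 d2]];
      rewrite cval_circle_of in d1 by lra; [lra|].
    destruct (cadd_cases (circle_of a) (cinv (circle_of b))) as [[c1 c2]|[c1 c2]];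
      rewrite d2, !cval_circle_of in * by lra; lra. }
  destruct hr as [hr|hr].
  - apply (Hdiff ((cval r + e) / 2) ((e - cval r) / 2)); lra.
  - apply (Hdiff ((e - 1 + cval r) / 2) ((e + 1 - cval r) / 2)); lra.
Qed.

Close Scope R_scope.

Open Scope R_scope.

Ltac box_conditions := try exact I; try assumption; try (apply open_full; assumption).

(* A basic unit neighbourhood of [H x R/Z] constrains [phi x] to a unit neighbourhood
   of [K] and the circle coordinate to [0, e); only on the level [0] does it constrain
   [x] itself. *)
Section HalfOpenExtension.
Context {H K : Grp} (OH : (H -> Prop) -> Prop) (OK : (K -> Prop) -> Prop) (phi : H -> K).
Hypotheses (HH : paratopological OH) (HK : paratopological OK) (Hphi : is_hom phi).

Local Notation G := (grp_prod H circle).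

Definition half_open_box (U : H -> Prop) (V : K -> Prop) (e : R) (z : G) : Prop :=
  V (phi (fst z)) /\ cval (snd z) < e /\ (cval (snd z) = 0 -> U (fst z)).

Definition half_open_nbhd (N : G -> Prop) : Prop :=
  exists U V e, OH U /\ U gone /\ OK V /\ V gone /\ 0 < e <= 1/2 /\
    forall z, half_open_box U V e z -> N z.

Definition product_box (V : K -> Prop) (e : R) (z : G) : Prop :=
  V (phi (fst z)) /\ (cval (snd z) < e \/ 1 - e < cval (snd z)).

Definition product_nbhd (N : G -> Prop) : Prop :=
  exists V e, OK V /\ V gone /\ 0 < e <= 1/2 /\ forall z, product_box V e z -> N z.

Lemma half_open_nbhd_of U V e : OH U -> U gone -> OK V -> V gone -> 0 < e <= 1/2 ->
  half_open_nbhd (half_open_box U V e).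
Proof. intros. now exists U, V, e. Qed.

Lemma product_nbhd_of V e : OK V -> V gone -> 0 < e <= 1/2 ->
  product_nbhd (product_box V e).
Proof. intros. now exists V, e. Qed.

Lemma half_open_nbhd_system : nbhd_system half_open_nbhd.
Proof.
  destruct HH as [HT [_ HM]], HK as [KT [_ KM]]. split.
  - exists (half_open_box (fun _ => True) (fun _ => True) (1/2)).
    apply half_open_nbhd_of; box_conditions; lra.
  - intros N [U [V [e [_ [U1 [_ [V1 [he HN]]]]]]]]. apply HN.
    unfold half_open_box. simpl. rewrite (hom_one phi Hphi), cval_czero.
    repeat split; auto; lra.
  - intros N1 N2 [U1 [V1 [e1 [OU1 [U11 [OV1 [V11 [he1 H1]]]]]]]]
                 [U2 [V2 [e2 [OU2 [U21 [OV2 [V21 [he2 H2]]]]]]]].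
    pose proof (Rmin_l e1 e2). pose proof (Rmin_r e1 e2).
    exists (half_open_box (fun x => U1 x /\ U2 x) (fun x => V1 x /\ V2 x) (Rmin e1 e2)).
    split.
    + apply half_open_nbhd_of; try (apply open_inter; assumption);
        try (split; assumption).
      split; [apply Rmin_glb_lt|]; lra.
    + intros z [[hv1 hv2] [ht hu]].
      split; [apply H1|apply H2]; repeat split; auto; try lra; intro h; apply hu; auto.
  - intros N [U [V [e [OU [U1 [OV [V1 [he HN]]]]]]]].
    destruct (unit_nbhd_mul OH HT HM U OU U1) as [U' [OU' [U'1 HU']]].
    destruct (unit_nbhd_mul OK KT KM V OV V1) as [V' [OV' [V'1 HV']]].
    exists (half_open_box U' V' (e/2)). split; [apply half_open_nbhd_of; auto; lra|].
    intros [x1 t1] [x2 t2] [a1 [b1 c1]] [a2 [b2 c2]]. simpl in *. apply HN.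
    pose proof (cval_range t1). pose proof (cval_range t2).
    unfold half_open_box; simpl. rewrite Hphi. split; [auto|].
    destruct (cadd_cases t1 t2) as [[d1 d2]|[d1 d2]]; [|lra].
    rewrite d2. split; [lra|]. intro h0. apply HU'; [apply c1|apply c2]; lra.
  - intros N [c1 c2] [U [V [e [OU [U1 [OV [V1 [he HN]]]]]]]].
    destruct (unit_nbhd_conj OH HT HM U c1 OU U1) as [U' [OU' [U'1 HU']]].
    destruct (unit_nbhd_conj OK KT KM V (phi c1) OV V1) as [V' [OV' [V'1 HV']]].
    exists (half_open_box U' V' e). split; [now apply half_open_nbhd_of|].
    intros [x t] [a [b c]]. apply HN. unfold half_open_box. simpl in *.
    rewrite (cadd_conj c2 t), !Hphi, (hom_inv phi Hphi). auto.
Qed.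

Lemma half_open_nbhd_separating : (forall x y, phi x = phi y -> x = y) ->
  forall g : G, g <> gone ->
  exists N, half_open_nbhd N /\ forall x y, N x -> N y -> gmul g x <> y.
Proof.
  intros Hi [c r] Hg. destruct HH as [HT _], HK as [KT _].
  destruct (classic (c = gone)) as [->|Hc].
  - assert (Hr : cval r <> 0).
    { intro E. apply Hg. simpl. f_equal. apply cval_inj. now rewrite cval_czero. }
    pose proof (cval_range r).
    set (e := Rmin (Rmin (cval r) (1 - cval r)) (1/2)).
    assert (He : 0 < e <= 1/2 /\ e <= cval r /\ e <= 1 - cval r).
    { unfold e. pose proof (Rmin_l (Rmin (cval r) (1 - cval r)) (1/2)).
      pose proof (Rmin_r (Rmin (cval r) (1 - cval r)) (1/2)).
      pose proof (Rmin_l (cval r) (1 - cval r)). pose proof (Rmin_r (cval r) (1 - cval r)).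
      repeat split; try lra. repeat apply Rmin_glb_lt; lra. }
    exists (half_open_box (fun _ => True) (fun _ => True) e).
    split; [apply half_open_nbhd_of; box_conditions; lra|].
    intros [x t] [x' t'] [_ [h1 _]] [_ [h2 _]] E. simpl in *.
    injection E as _ E. pose proof (cval_range t). pose proof (cval_range t').
    destruct (cadd_cases r t) as [[d1 d2]|[d1 d2]]; rewrite E in d2; lra.
  - assert (Hpc : phi c <> gone).
    { intro E. apply Hc, Hi. now rewrite (hom_one phi Hphi). }
    destruct (unit_nbhd_avoid OK (phi c) HK Hpc) as [V [OV [V1 HV]]].
    exists (half_open_box (fun _ => True) V (1/2)).
    split; [apply half_open_nbhd_of; box_conditions; lra|].
    intros [x t] [x' t'] [h1 _] [h2 _] E. simpl in *. injection E as E _.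
    apply HV. exists (phi x'), (phi x). repeat split; auto.
    rewrite <- E, Hphi. now gsimpl.
Qed.

Lemma half_open_nbhd_finitely_covered :
  totally_bounded OK -> (forall k, exists x, phi x = k) ->
  forall N, half_open_nbhd N -> finitely_covered N.
Proof.
  intros TB Hs N [U [V [e [OU [U1 [OV [V1 [he HN]]]]]]]].
  destruct (TB V) as [FK [C1 C2]]. { now exists V. }
  destruct (circle_finitely_covered e) as [FT HT]; [lra|].
  set (pre := fun k : K => epsilon (inhabits (@gone H)) (fun h => phi h = k)).
  assert (Hpre : forall k, phi (pre k) = k)
    by (intro k; apply (epsilon_spec (inhabits gone)), Hs).
  exists (list_prod (map pre FK) FT). split; intros [g s].
  - destruct (C1 (phi g)) as [k [v [Hk [Vv E]]]].
    destruct (HT s) as [r [t [Hr [ht Es]]]].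
    exists (pre k, r), (gmul (ginv (pre k)) g, t).
    split; [apply in_prod; auto; now apply in_map|]. split.
    + apply HN. unfold half_open_box; simpl.
      rewrite Hphi, (hom_inv phi Hphi), Hpre, E. gsimpl. repeat split; auto; lra.
    + simpl. rewrite <- Es. now gsimpl.
  - destruct (C2 (phi g)) as [k [v [Hk [Vv E]]]].
    destruct (HT s) as [r [t [Hr [ht Es]]]].
    exists (pre k, r), (gmul g (ginv (pre k)), t).
    split; [apply in_prod; auto; now apply in_map|]. split.
    + apply HN. unfold half_open_box; simpl.
      rewrite Hphi, (hom_inv phi Hphi), Hpre, E. gsimpl. repeat split; auto; lra.
    + simpl. rewrite caddC, <- Es. now gsimpl.
Qed.

Lemma half_open_embedding : continuous_map OH OK phi ->
  subgroup_embedding OH (nbhd_topology half_open_nbhd) (fun h => (h, czero) : G).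
Proof.
  intro Hc. destruct HH as [HT [_ HM]], HK as [KT _].
  pose proof half_open_nbhd_system as Hsys.
  split; [|split].
  - intros x y. simpl. now rewrite cadd0.
  - intros x y E. now injection E.
  - intro U. split.
    + intro OU.
      exists (nbhd_interior half_open_nbhd (fun z => cval (snd z) = 0 -> U (fst z))).
      split; [now apply nbhd_interior_open|]. intro x. split.
      * intro Ux. exists (half_open_box (fun y => U (gmul x y)) (fun _ => True) (1/2)).
        split.
        -- apply half_open_nbhd_of; box_conditions.
           ++ now apply open_mul_l.
           ++ now rewrite gmulg1.
           ++ lra.
        -- intros [y t] [_ [_ h]]. simpl. now rewrite cadd0.
      * intro Hx. apply (nbhd_interior_sub _ Hsys) in Hx. apply Hx. apply cval_czero.
    + intros [V [OV HV]]. apply open_of_nbhds; auto. intros x Ux.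
      destruct (OV _ (proj1 (HV x) Ux)) as
        [N [[U1 [V1 [e [OU1 [U11 [OV1 [V11 [he HN]]]]]]]] HN2]].
      exists (fun y => U1 (gmul (ginv x) y) /\ V1 (phi (gmul (ginv x) y))). split.
      * apply open_inter; auto.
        -- now apply (open_mul_l OH HT HM).
        -- exact (open_mul_l OH HT HM (fun y => V1 (phi y)) (ginv x) (Hc V1 OV1)).
      * split; [now rewrite gmulV, (hom_one phi Hphi)|].
        intros y [h1 h2]. apply HV.
        replace (y, czero) with (gmul ((x, czero) : G) (gmul (ginv x) y, czero))
          by (simpl; now rewrite gmulKVg, cadd0).
        apply HN2, HN. unfold half_open_box; simpl.
        rewrite cval_czero. repeat split; auto; lra.
Qed.

Lemma product_nbhd_system : nbhd_system product_nbhd.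
Proof.
  destruct HK as [KT [_ KM]]. split.
  - exists (product_box (fun _ => True) (1/2)). apply product_nbhd_of; box_conditions; lra.
  - intros N [V [e [_ [V1 [he HN]]]]]. apply HN.
    unfold product_box. simpl. rewrite (hom_one phi Hphi), cval_czero. split; auto; lra.
  - intros N1 N2 [V1 [e1 [OV1 [V11 [he1 H1]]]]] [V2 [e2 [OV2 [V21 [he2 H2]]]]].
    pose proof (Rmin_l e1 e2). pose proof (Rmin_r e1 e2).
    exists (product_box (fun x => V1 x /\ V2 x) (Rmin e1 e2)). split.
    + apply product_nbhd_of; try (apply open_inter; assumption);
        try (split; assumption).
      split; [apply Rmin_glb_lt|]; lra.
    + intros z [[hv1 hv2] ht]. split; [apply H1|apply H2]; split; auto; lra.
  - intros N [V [e [OV [V1 [he HN]]]]].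
    destruct (unit_nbhd_mul OK KT KM V OV V1) as [V' [OV' [V'1 HV']]].
    exists (product_box V' (e/2)). split; [apply product_nbhd_of; auto; lra|].
    intros [x1 t1] [x2 t2] [a1 b1] [a2 b2]. simpl in *. apply HN.
    unfold product_box; simpl. pose proof (cval_range t1). pose proof (cval_range t2).
    rewrite Hphi. split; [auto|].
    destruct (cadd_cases t1 t2) as [[d1 d2]|[d1 d2]]; rewrite d2; lra.
  - intros N [c1 c2] [V [e [OV [V1 [he HN]]]]].
    destruct (unit_nbhd_conj OK KT KM V (phi c1) OV V1) as [V' [OV' [V'1 HV']]].
    exists (product_box V' e). split; [now apply product_nbhd_of|].
    intros [x t] [a b]. apply HN. unfold product_box. simpl in *.
    rewrite (cadd_conj c2 t), !Hphi, (hom_inv phi Hphi). auto.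
Qed.

Lemma product_nbhd_inv : inv_continuous OK ->
  forall N, product_nbhd N -> exists N', product_nbhd N' /\ forall x, N' x -> N (ginv x).
Proof.
  intros KI N [V [e [OV [V1 [he HN]]]]].
  exists (product_box (fun k => V (ginv k)) e). split.
  - apply product_nbhd_of; auto. now rewrite ginv1.
  - intros [x t] [a b]. apply HN. unfold product_box. simpl in *.
    rewrite (hom_inv phi Hphi). split; [auto|]. pose proof (cval_range t).
    destruct (cinv_cases t) as [[d1 d2]|[d1 d2]]; rewrite d2; lra.
Qed.

Lemma product_topology_finest (rho : (G -> Prop) -> Prop) :
  group_topology rho -> (forall W, rho W -> nbhd_topology half_open_nbhd W) ->
  forall W, rho W -> nbhd_topology product_nbhd W.
Proof.
  (* Every element of [product_box V e] is [(x, s) (1, t)^-1] with [s, t] in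
     (0, e): both factors leave the level [0], where no constraint on [H] applies. *)
  intros [rT [rM rI]] Hsub W HW p Wp.
  set (W' := fun z => W (gmul p z)).
  assert (OW' : rho W') by now apply open_mul_l.
  assert (W'1 : W' (gmul gone gone)) by (unfold W'; now rewrite gmul1, gmulg1).
  destruct (rM gone gone W' OW' W'1) as [A1 [B1 [OA1 [OB1 [A11 [B11 HAB]]]]]].
  set (A := fun z => A1 z /\ B1 (ginv z)).
  assert (OA : rho A) by (apply open_inter; auto).
  assert (A1' : A gone) by (split; auto; now rewrite ginv1).
  destruct (Hsub A OA gone A1') as [N0 [[U [V [e [OU [U1 [OV [V1 [he HN]]]]]]]] HN2]].
  exists (product_box V e). split; [now apply product_nbhd_of|].
  intros [x r] [Vx Hr]. simpl in Vx.
  destruct (circle_near_zero_diff e r he Hr) as [s [t [hs [ht Er]]]].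
  assert (Aa : A (x, s)).
  { rewrite <- (gmul1 ((x, s) : G)). apply HN2, HN.
    unfold half_open_box; simpl. repeat split; auto; lra. }
  assert (Ab : A (gone, t)).
  { rewrite <- (gmul1 ((gone, t) : G)). apply HN2, HN. unfold half_open_box; simpl.
    rewrite (hom_one phi Hphi). repeat split; auto; lra. }
  destruct Aa as [Aa _], Ab as [_ Bb].
  replace (x, r) with (gmul ((x, s) : G) (ginv ((gone, t) : G)))
    by (simpl; now rewrite ginv1, gmulg1, <- Er).
  exact (HAB _ _ Aa Bb).
Qed.

Lemma product_topology_is_flat : inv_continuous OK ->
  is_flat (nbhd_topology half_open_nbhd) (nbhd_topology product_nbhd).
Proof.
  intro KI. pose proof product_nbhd_system as Psys.
  pose proof half_open_nbhd_system as Hsys. split; [|split].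
  - split; [now apply nbhd_topology_is_topology|].
    split; [now apply nbhd_topology_mul_continuous|].
    apply nbhd_topology_inv_continuous; auto. now apply product_nbhd_inv.
  - apply nbhd_topology_coarser.
    + now apply nbhd_topology_is_topology.
    + now apply nbhd_topology_mul_continuous.
    + intros N [V [e [OV [V1 [he HN]]]]].
      destruct (nbhd_one_nbhd_topology _ Hsys (half_open_box (fun _ => True) V e))
        as [W [OW [W1 HW]]].
      { apply half_open_nbhd_of; auto. apply open_full, HH. }
      exists W. repeat split; auto. intros z Wz. apply HN.
      destruct (HW z Wz) as [? [? _]]. split; auto.
  - exact product_topology_finest.
Qed.

Lemma level_zero_product_closed :
  closed_in (nbhd_topology product_nbhd) (fun g => exists h, ((h, czero) : G) = g).
Proof.
  intros [x s] Hn.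
  assert (hs : cval s <> 0).
  { intro E. apply Hn. exists x. f_equal. apply cval_inj. now rewrite cval_czero. }
  pose proof (cval_range s).
  set (e := Rmin (cval s / 2) ((1 - cval s) / 2)).
  assert (He : 0 < e <= 1/2 /\ e <= cval s / 2 /\ e <= (1 - cval s) / 2).
  { unfold e. pose proof (Rmin_l (cval s / 2) ((1 - cval s) / 2)).
    pose proof (Rmin_r (cval s / 2) ((1 - cval s) / 2)).
    repeat split; try lra. apply Rmin_glb_lt; lra. }
  exists (product_box (fun _ => True) e).
  split; [apply product_nbhd_of; try exact I; try lra; apply open_full, HK|].
  intros [y t] [_ ht] [h E]. simpl in ht, E. injection E as _ E.
  pose proof (cval_range t).
  destruct (cadd_cases s t) as [[c1 c2]|[c1 c2]]; rewrite <- E, cval_czero in c2; lra.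
Qed.

End HalfOpenExtension.

Close Scope R_scope.

Lemma flat_closed_subgroup_of_bohr_separated {H : Grp} (OH : (H -> Prop) -> Prop) :
  paratopological OH -> bohr_separated OH ->
  exists (G : Grp) (OG : (G -> Prop) -> Prop) (f : H -> G),
    paratopological OG /\ totally_bounded OG /\ subgroup_embedding OH OG f /\
    flat_closed OG (fun g => exists h, f h = g).
Proof.
  intros HH [K [OK [phi [[HK KI] [TB [Hphi [Hc [Hi Hs]]]]]]]].
  pose proof (half_open_nbhd_system OH OK phi HH HK Hphi) as Hsys.
  exists (grp_prod H circle), (nbhd_topology (half_open_nbhd OH OK phi)),
    (fun h => (h, czero)).
  split; [|split; [|split]].
  - split; [now apply nbhd_topology_is_topology|].
    split; [|now apply nbhd_topology_mul_continuous].
    apply nbhd_topology_hausdorff; auto. now apply half_open_nbhd_separating.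
  - apply nbhd_topology_totally_bounded. now apply half_open_nbhd_finitely_covered.
  - now apply half_open_embedding.
  - exists (nbhd_topology (product_nbhd OK phi)). split.
    + now apply product_topology_is_flat.
    + now apply level_zero_product_closed.
Qed.

Theorem corollary5 (H : Grp) (OH : (H -> Prop) -> Prop) :
  paratopological OH ->
  (bohr_separated OH <->
   exists (G : Grp) (OG : (G -> Prop) -> Prop) (f : H -> G),
     paratopological OG /\ totally_bounded OG /\ subgroup_embedding OH OG f) /\
  ((exists (G : Grp) (OG : (G -> Prop) -> Prop) (f : H -> G),
     paratopological OG /\ totally_bounded OG /\ subgroup_embedding OH OG f) <->
   exists (G : Grp) (OG : (G -> Prop) -> Prop) (f : H -> G),
     paratopological OG /\ totally_bounded OG /\ subgroup_embedding OH OG f /\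
     flat_closed OG (fun g => exists h, f h = g)).
Proof.
  intro HH.
  assert (b_to_a : (exists (G : Grp) (OG : (G -> Prop) -> Prop) (f : H -> G),
      paratopological OG /\ totally_bounded OG /\ subgroup_embedding OH OG f) ->
      bohr_separated OH).
  { intros [G [OG [f [HP [TB Hemb]]]]].
    exact (bohr_separated_of_subgroup OH OG f HH HP TB Hemb). }
  assert (a_to_c := flat_closed_subgroup_of_bohr_separated OH HH).
  split; split.
  - intro Hb. destruct (a_to_c Hb) as [G [OG [f [? [? [? _]]]]]]. now exists G, OG, f.
  - exact b_to_a.
  - intro Hb. now apply a_to_c, b_to_a.
  - intros [G [OG [f [? [? [? _]]]]]]. now exists G, OG, f.
Qed.
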